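(* The set $S\setminus\widehat{c}$ is strongly $\mathfrak{c}$-algebrable in the algebra $\ell^\infty$ (with pointwise operations).
   Context: $\ell^\infty$ is the algebra of bounded real sequences with coordinatewise operations. A Banach limit is a linear functional $L\colon\ell^\infty\to\mathbb R$ such that for every $(x_n)\in\ell^\infty$: (1) if $x_n\ge0$ for all $n$ then $L((x_n))\ge0$; (2) $L((x_2,x_3,\dots))=L((x_1,x_2,\dots))$; (3) $L((1,1,\dots))=1$. $\widehat{c}$ is the set of $x\in\ell^\infty$ for which there is $s\in\mathbb R$ with $L(x)=s$ for every Banach limit $L$. $S=\{x\in\ell^\infty\colon\lim_n\frac{x_1+\dots+x_n}{n}\text{ exists}\}$. A subset $A$ of a commutative algebra $\mathcal L$ is strongly $\kappa$-algebrable if $A\cup\{0\}$ contains a $\kappa$-generated subalgebra (minimal number of generators of cardinality $\kappa$) which is isomorphic to a free algebra; equivalently, there is a set $Z\subset\mathcal L$ of cardinality $\kappa$ such that for every $n$, every non-zero polynomial $P$ in $n$ variables without constant term and all distinct $z_1,\dots,z_n\in Z$, $P(z_1,\dots,z_n)\in A\setminus\{0\}$. $\mathfrak c$ is the cardinality of the continuum. *)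

From Stdlib Require Import Reals.
From HB Require Import structures.
From mathcomp Require Import all_boot all_order all_algebra.
From mathcomp Require Import Rstruct.
From mathcomp Require Import mpoly.

Set Implicit Arguments.
Unset Strict Implicit.
Unset Printing Implicit Defensive.

Local Open Scope R_scope.

Definition bounded (x : nat -> R) : Prop :=
  exists M : R, forall k : nat, Rabs (x k) <= M.

(* A Banach limit: a linear functional on l^infty (its values outside
   l^infty are irrelevant), positive, shift invariant, with L(1,1,...) = 1. *)
Definition banach_limit (L : (nat -> R) -> R) : Prop :=
  (forall x y, bounded x -> bounded y ->
     L (fun k => x k + y k) = L x + L y) /\
  (forall (a : R) x, bounded x -> L (fun k => a * x k) = a * L x) /\
  (forall x, bounded x -> (forall k, 0 <= x k) -> 0 <= L x) /\
  (forall x, bounded x -> L (fun k => x (S k)) = L x) /\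
  L (fun _ => 1) = 1.

Definition c_hat (x : nat -> R) : Prop :=
  bounded x /\ exists s : R, forall L, banach_limit L -> L x = s.

(* S: bounded sequences whose Cesaro means (x_1+...+x_n)/n converge
   (with 0-based indexing: (x 0 + ... + x n)/(n+1)). *)
Definition cesaro_S (x : nat -> R) : Prop :=
  bounded x /\ exists l : R, Un_cv (fun n => sum_f_R0 x n / INR (S n)) l.

Definition peval_seq (n : nat) (P : {mpoly R[n]}) (z : 'I_n -> nat -> R)
  : nat -> R := fun k => P.@[fun i => z i k].

(* A is strongly kappa-algebrable in l^infty, with kappa = |K|: there is a set
   Z of l^infty of cardinality |K| (the image of an injection f : K -> l^infty)
   such that for every n, every non-zero polynomial P in n variables without
   constant term and all distinct z_1,...,z_n in Z, P(z_1,...,z_n) is in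
   A \ {0}. *)
Definition strongly_algebrable (K : Type) (A : (nat -> R) -> Prop) : Prop :=
  exists f : K -> (nat -> R),
    injective f /\ (forall t, bounded (f t)) /\
    forall (n : nat) (P : {mpoly R[n]}) (t : 'I_n -> K),
      injective t -> P != 0%R -> (P@_0%MM = 0)%R ->
      A (peval_seq P (fun i => f (t i))) /\
      peval_seq P (fun i => f (t i)) <> (fun _ => 0).

(* Let A be a set of naturals of density zero which, for every tag j, contains
   windows of unbounded length all of whose points carry tag j, while its
   complement also contains windows of unbounded length.  Countably many codes
   describe functions f_j : R -> [0,1] able to send any finitely many distinct
   reals to any prescribed values 1/(k+2).  The generator attached to t is the
   sequence equal to f_(tag k)(t) at k in A and to 0 elsewhere.
   For distinct t_1, ..., t_n and a nonzero P without constant term, the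
   sequence y = P(x_(t_1), ..., x_(t_n)) vanishes off A, so its Cesaro means
   tend to 0.  A nonzero polynomial does not vanish on the whole grid of points
   1/(k+2); if f_j sends the t_i to such a point, y is a nonzero constant on
   the windows of tag j and 0 on the gaps.  Ultralimits of averages over
   windows of unbounded length are Banach limits, and the two window families
   give Banach limits with different values at y, so y is not in c-hat. *)

From Stdlib Require Import Reals Lra Lia Classical ClassicalEpsilon FunctionalExtensionality.
From HB Require Import structures.
From mathcomp Require Import all_boot all_order all_algebra Rstruct mpoly zify ssrZ.
From mathcomp Require filter.

Set Implicit Arguments.
Unset Strict Implicit.
Unset Printing Implicit Defensive.

Local Open Scope R_scope.

Record free_ultrafilter (U : (nat -> Prop) -> Prop) : Prop := {
  ultra_mono : forall A B : nat -> Prop, (forall i, A i -> B i) -> U A -> U B;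
  ultra_and : forall A B, U A -> U B -> U (fun i => A i /\ B i);
  ultra_proper : ~ U (fun _ => False);
  ultra_em : forall A, U A \/ U (fun i => ~ A i);
  ultra_tail : forall N, U (fun i => (N <= i)%N) }.

Lemma free_ultrafilter_exists : exists U, free_ultrafilter U.
Proof.
pose F := fun A : nat -> Prop => exists N, forall i, (N <= i)%N -> A i.
have F_proper : filter.ProperFilter F.
  split; first by case=> N /(_ N (leqnn N)).
  split; first by exists 0%N.
  - move=> A B [N1 HA] [N2 HB]; exists (maxn N1 N2) => i Hi.
    by split; [apply: HA | apply: HB]; lia.
  - by move=> A B AB [N HA]; exists N => i /HA /AB.
have [G [G_ultra FG]] := filter.ultraFilterLemma F_proper.
exists G; split.
- by move=> A B AB; apply: filter.filterS.
- by move=> A B; apply: filter.filterI.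
- exact: filter.filter_not_empty.
- by move=> A; exact: (filter.in_ultra_setVsetC A G_ultra).
- by move=> N; apply: FG; exists N.
Qed.

Section Ultralimit.

Variable U : (nat -> Prop) -> Prop.
Hypothesis HU : free_ultrafilter U.

Lemma ultra_all (A : nat -> Prop) : (forall i, A i) -> U A.
Proof. by move=> HA; apply: (ultra_mono HU _ (ultra_tail HU 0)) => i _. Qed.

Lemma ultra_witness A : U A -> exists i, A i.
Proof.
move=> HA; apply: NNPP => none; apply: (ultra_proper HU).
by apply: (ultra_mono HU _ HA) => i Ai; apply: none; exists i.
Qed.

Definition ultra_near (y : nat -> R) (l : R) :=
  forall eps, 0 < eps -> U (fun i => Rabs (y i - l) < eps).

Lemma ultra_near_unique y a b : ultra_near y a -> ultra_near y b -> a = b.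
Proof.
move=> Ha Hb; apply: NNPP => ab.
have e_gt0 : 0 < Rabs (a - b) / 2 by apply: Rdiv_lt_0_compat; [apply: Rabs_pos_lt; lra | lra].
have [i [Hia Hib]] := ultra_witness (ultra_and HU (Ha _ e_gt0) (Hb _ e_gt0)).
have : Rabs (a - b) <= Rabs (y i - a) + Rabs (y i - b).
  rewrite -(Rabs_Ropp (y i - a)); apply: Rle_trans (Rabs_triang _ _).
  by right; congr Rabs; ring.
lra.
Qed.

(* The limit is the supremum of the reals r with r <= y i for U-almost all i. *)
Lemma bounded_ultra_near y : bounded y -> exists l, ultra_near y l.
Proof.
case=> M HM; pose E r := U (fun i => r <= y i).
have E_bound : bound E.
  exists M => r /ultra_witness [i Hi].
  by have := HM i; have := RRle_abs (y i); lra.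
have E_inhabited : exists r, E r.
  exists (- M); apply: ultra_all => i.
  by have := HM i; have := Rabs_Ropp (y i); have := RRle_abs (- y i); lra.
have [l [l_ub l_least]] := completeness E E_bound E_inhabited.
exists l => eps eps_gt0.
have above : U (fun i => l - eps < y i).
  case: (classic (exists r, E r /\ l - eps < r)) => [[r [Er lt_r]]|none].
    by apply: (ultra_mono HU _ Er) => i; lra.
  suff : l <= l - eps by lra.
  apply: l_least => r Er; apply: Rnot_lt_le => lt_r.
  by apply: none; exists r.
have below : U (fun i => y i < l + eps).
  case: (ultra_em HU (fun i => y i < l + eps)) => // Hn.
  suff : l + eps <= l by lra.
  by apply: l_ub; apply: (ultra_mono HU _ Hn) => i; lra.
by apply: (ultra_mono HU _ (ultra_and HU above below)) => i [? ?]; apply: Rabs_def1; lra.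
Qed.

End Ultralimit.

Definition ulim U (y : nat -> R) : R := epsilon (inhabits 0) (ultra_near U y).

Section UltralimitAlgebra.

Variable U : (nat -> Prop) -> Prop.
Hypothesis HU : free_ultrafilter U.

Lemma ulim_eq y l : ultra_near U y l -> ulim U y = l.
Proof.
move=> Hl; apply: (ultra_near_unique HU _ Hl).
exact: (epsilon_spec (inhabits 0) (ultra_near U y) (ex_intro _ l Hl)).
Qed.

Lemma ulimP y : bounded y -> ultra_near U y (ulim U y).
Proof. by case/(bounded_ultra_near HU) => l Hl; rewrite (ulim_eq Hl). Qed.

Lemma ulim_const c : ulim U (fun _ => c) = c.
Proof.
apply: ulim_eq => eps eps_gt0; apply: (ultra_all HU) => i.
by rewrite Rminus_diag Rabs_R0.
Qed.

Lemma ulimD u v : bounded u -> bounded v ->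
  ulim U (fun i => u i + v i) = ulim U u + ulim U v.
Proof.
move=> Hu Hv; apply: ulim_eq => eps eps_gt0.
have e2_gt0 : 0 < eps / 2 by lra.
apply: (ultra_mono HU _ (ultra_and HU (ulimP Hu e2_gt0) (ulimP Hv e2_gt0))).
move=> i [Hui Hvi].
have -> : u i + v i - (ulim U u + ulim U v) = (u i - ulim U u) + (v i - ulim U v) by ring.
by apply: Rle_lt_trans (Rabs_triang _ _) _; lra.
Qed.

Lemma ulimZ a u : bounded u -> ulim U (fun i => a * u i) = a * ulim U u.
Proof.
move=> Hu; apply: ulim_eq => eps eps_gt0.
have a1_gt0 : 0 < Rabs a + 1 by have := Rabs_pos a; lra.
apply: (ultra_mono HU _ (ulimP Hu (Rdiv_lt_0_compat _ _ eps_gt0 a1_gt0))) => i Hi.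
rewrite -Rmult_minus_distr_l Rabs_mult.
apply: Rle_lt_trans (_ : (Rabs a + 1) * Rabs (u i - ulim U u) < eps).
  by apply: Rmult_le_compat_r; [apply: Rabs_pos | lra].
have := Rmult_lt_compat_l _ _ _ a1_gt0 Hi.
by have -> : (Rabs a + 1) * (eps / (Rabs a + 1)) = eps by field; lra.
Qed.

Lemma ulim_ge0 u : bounded u -> (forall i, 0 <= u i) -> 0 <= ulim U u.
Proof.
move=> Hu u_ge0; apply: Rnot_lt_le => neg.
have [i Hi] := ultra_witness HU (ulimP Hu (Ropp_0_gt_lt_contravar _ neg)).
by have := u_ge0 i; have := Rabs_def2 _ _ Hi; lra.
Qed.

Lemma ulim_asymp u v : bounded v -> Un_cv (fun i => u i - v i) 0 -> ulim U u = ulim U v.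
Proof.
move=> Hv uv0; apply: ulim_eq => eps eps_gt0.
have e2_gt0 : 0 < eps / 2 by lra.
have [N HN] := uv0 _ e2_gt0.
apply: (ultra_mono HU _ (ultra_and HU (ultra_tail HU N) (ulimP Hv e2_gt0))) => i [/leP/HN Hi Hvi].
rewrite /R_dist Rminus_0_r in Hi.
have -> : u i - ulim U v = (u i - v i) + (v i - ulim U v) by ring.
by apply: Rle_lt_trans (Rabs_triang _ _) _; lra.
Qed.

End UltralimitAlgebra.

Lemma Un_cv0_le (u v : nat -> R) C :
  (forall i, Rabs (u i) <= C * Rabs (v i)) -> Un_cv v 0 -> Un_cv u 0.
Proof.
move=> uv v0 eps eps_gt0.
have C1_gt0 : 0 < Rabs C + 1 by have := Rabs_pos C; lra.
have [N HN] := v0 _ (Rdiv_lt_0_compat _ _ eps_gt0 C1_gt0).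
exists N => i /HN; rewrite /R_dist !Rminus_0_r => Hv.
have C_le : C <= Rabs C + 1 by have := RRle_abs C; lra.
have := Rmult_le_compat_r _ _ _ (Rabs_pos (v i)) C_le.
have := Rmult_lt_compat_l _ _ _ C1_gt0 Hv.
have -> : (Rabs C + 1) * (eps / (Rabs C + 1)) = eps by field; lra.
by have := uv i; lra.
Qed.

Lemma Un_cv_inv_succ : Un_cv (fun i => / INR i.+1) 0.
Proof. by apply: Un_cv_ext RinvN_cv => i; rewrite S_INR; reflexivity. Qed.

Fixpoint window_sum (x : nat -> R) (a l : nat) : R :=
  if l is l'.+1 then window_sum x a l' + x (a + l')%N else 0.

Definition window_mean (x : nat -> R) (a l : nat) : R := window_sum x a l / INR l.

Lemma window_sumD x y a l :
  window_sum (fun k => x k + y k) a l = window_sum x a l + window_sum y a l.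
Proof. by elim: l => [|l IH] /=; rewrite ?IH; ring. Qed.

Lemma window_sumZ c x a l : window_sum (fun k => c * x k) a l = c * window_sum x a l.
Proof. by elim: l => [|l IH] /=; rewrite ?IH; ring. Qed.

Lemma window_sum_ge0 x a l : (forall k, 0 <= x k) -> 0 <= window_sum x a l.
Proof. by move=> x_ge0; elim: l => [|l IH] /=; [lra | have := x_ge0 (a + l)%N; lra]. Qed.

Lemma window_sum_abs_le x a l M :
  (forall k, Rabs (x k) <= M) -> Rabs (window_sum x a l) <= INR l * M.
Proof.
move=> x_le; elim: l => [|l IH]; first by rewrite /= Rabs_R0 Rmult_0_l; lra.
rewrite S_INR /=; apply: Rle_trans (Rabs_triang _ _) _.
by have := x_le (a + l)%N; lra.
Qed.

Lemma window_sum_shift x a l :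
  window_sum (fun k => x k.+1) a l = window_sum x a l + x (a + l)%N - x a.
Proof.
elim: l => [|l IH] /=; first by rewrite addn0; ring.
by rewrite IH addnS; ring.
Qed.

Lemma window_sum_const x a l v :
  (forall k, (k < l)%N -> x (a + k)%N = v) -> window_sum x a l = INR l * v.
Proof.
elim: l => [|l IH] x_eq; first by rewrite /=; ring.
rewrite S_INR /= IH ?x_eq //; first ring.
by move=> k lt_k; apply: x_eq; lia.
Qed.

(* Also for [l = 0], where the mean is [0 / 0 = 0]. *)
Lemma window_mean_abs_le x a l M :
  (forall k, Rabs (x k) <= M) -> Rabs (window_mean x a l) <= M.
Proof.
move=> x_le; have M_ge0 : 0 <= M by have := x_le 0%N; have := Rabs_pos (x 0%N); lra.
case: l => [|l]; first by rewrite /window_mean /= /Rdiv Rmult_0_l Rabs_R0.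
have l_gt0 : 0 < INR l.+1 by apply: lt_0_INR; lia.
rewrite /window_mean /Rdiv Rabs_mult Rabs_inv (Rabs_right (INR l.+1)); last by lra.
apply: (Rmult_le_reg_r _ _ _ l_gt0); rewrite Rmult_assoc Rinv_l; last by lra.
by rewrite Rmult_1_r Rmult_comm; apply: window_sum_abs_le.
Qed.

Lemma window_mean_const x a l v :
  (0 < l)%N -> (forall k, (k < l)%N -> x (a + k)%N = v) -> window_mean x a l = v.
Proof.
move=> l_gt0 x_eq; rewrite /window_mean (window_sum_const x_eq).
by field; apply: not_0_INR; lia.
Qed.

Lemma bounded_window_mean x (a len : nat -> nat) :
  bounded x -> bounded (fun i => window_mean x (a i) (len i)).
Proof. by case=> M HM; exists M => i; apply: window_mean_abs_le. Qed.

Lemma window_mean_shift_null x (a len : nat -> nat) :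
  (forall i, (i < len i)%N) -> bounded x ->
  Un_cv (fun i => window_mean (fun k => x k.+1) (a i) (len i)
                  - window_mean x (a i) (len i)) 0.
Proof.
move=> len_gt [M HM]; apply: (Un_cv0_le (C := 2 * M)) Un_cv_inv_succ => i.
have i_le : INR i.+1 <= INR (len i) by apply: le_INR; apply/leP.
have i_gt0 : 0 < INR i.+1 by apply: lt_0_INR; lia.
have jump : Rabs (x (a i + len i)%N - x (a i)) <= 2 * M.
  apply: Rle_trans (Rabs_triang _ _) _; rewrite Rabs_Ropp.
  by have := HM (a i + len i)%N; have := HM (a i); lra.
rewrite /window_mean window_sum_shift.
have -> : (window_sum x (a i) (len i) + x (a i + len i)%N - x (a i)) / INR (len i)
          - window_sum x (a i) (len i) / INR (len i)
          = (x (a i + len i)%N - x (a i)) * / INR (len i) by field; lra.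
rewrite Rabs_mult !Rabs_inv (Rabs_right (INR (len i))) ?(Rabs_right (INR i.+1)); try lra.
apply: Rmult_le_compat => //; first exact: Rabs_pos.
  by left; apply: Rinv_0_lt_compat; lra.
exact: Rinv_le_contravar.
Qed.

Definition window_limit U (a len : nat -> nat) (x : nat -> R) : R :=
  ulim U (fun i => window_mean x (a i) (len i)).

Section WindowLimit.

Variables (U : (nat -> Prop) -> Prop) (a len : nat -> nat).
Hypotheses (HU : free_ultrafilter U) (len_gt : forall i, (i < len i)%N).

Lemma window_limit_banach : banach_limit (window_limit U a len).
Proof.
have mean_bounded := @bounded_window_mean _ a len.
have len_neq0 i : INR (len i) <> 0 by apply: not_0_INR; have := len_gt i; lia.
rewrite /window_limit; split; [|split; [|split; [|split]]].
- move=> x y Hx Hy; rewrite -(ulimD HU (mean_bounded _ Hx) (mean_bounded _ Hy)).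
  by congr ulim; apply: functional_extensionality => i; rewrite /window_mean window_sumD; field.
- move=> c x Hx; rewrite -(ulimZ HU c (mean_bounded _ Hx)).
  by congr ulim; apply: functional_extensionality => i; rewrite /window_mean window_sumZ; field.
- move=> x Hx x_ge0; apply: ulim_ge0 (mean_bounded _ Hx) _ => // i.
  apply: Rmult_le_pos; first exact: window_sum_ge0.
  by apply: Rlt_le; apply: Rinv_0_lt_compat; apply: lt_0_INR; have := len_gt i; lia.
- move=> x Hx; apply: ulim_asymp (mean_bounded _ Hx) _ => //.
  exact: window_mean_shift_null.
- rewrite -{2}(ulim_const HU 1); congr ulim; apply: functional_extensionality => i.
  by apply: window_mean_const => //; have := len_gt i; lia.
Qed.

Lemma window_limit_const x v :
  (forall i k, (k < len i)%N -> x (a i + k)%N = v) -> window_limit U a len x = v.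
Proof.
move=> x_eq; rewrite /window_limit -(ulim_const HU v); congr ulim.
apply: functional_extensionality => i; apply: window_mean_const (x_eq i).
by have := len_gt i; lia.
Qed.

End WindowLimit.

Lemma not_c_hat_of_windows x (a1 len1 a2 len2 : nat -> nat) v1 v2 :
  (forall i, (i < len1 i)%N) -> (forall i, (i < len2 i)%N) ->
  (forall i k, (k < len1 i)%N -> x (a1 i + k)%N = v1) ->
  (forall i k, (k < len2 i)%N -> x (a2 i + k)%N = v2) ->
  v1 <> v2 -> ~ c_hat x.
Proof.
move=> len1_gt len2_gt x_eq1 x_eq2 v12 [_ [s Hs]].
have [U HU] := free_ultrafilter_exists.
have := Hs _ (window_limit_banach a1 HU len1_gt).
have := Hs _ (window_limit_banach a2 HU len2_gt).
by rewrite (window_limit_const HU len1_gt x_eq1) (window_limit_const HU len2_gt x_eq2); congruence.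
Qed.

Definition density_zero (p : pred nat) : Prop :=
  Un_cv (fun n => INR (count p (iota 0 n.+1)) / INR n.+1) 0.

Lemma count_iotaS (p : pred nat) n :
  count p (iota 0 n.+2) = (count p (iota 0 n.+1) + p n.+1)%N.
Proof. by rewrite -addn1 iotaD count_cat /= addn0. Qed.

Lemma sum_le_count (p : pred nat) x c B n :
  (forall k, ~~ p k -> x k = c) -> (forall k, Rabs (x k - c) <= B) ->
  Rabs (sum_f_R0 x n - INR n.+1 * c) <= B * INR (count p (iota 0 n.+1)).
Proof.
move=> x_off x_le; elim: n => [|n IH].
  rewrite /= Rmult_1_l addn0.
  case: (boolP (p 0%N)) => [_ | /x_off ->] /=; first by rewrite Rmult_1_r.
  by rewrite Rminus_diag Rabs_R0 Rmult_0_r; apply: Rle_refl.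
rewrite count_iotaS plus_INR Rmult_plus_distr_l /=.
have -> : sum_f_R0 x n + x n.+1 - INR n.+2 * c
          = (sum_f_R0 x n - INR n.+1 * c) + (x n.+1 - c) by rewrite S_INR; ring.
apply: Rle_trans (Rabs_triang _ _) (Rplus_le_compat _ _ _ _ IH _).
case: (boolP (p n.+1)) => [_ | /x_off ->] /=; first by rewrite Rmult_1_r.
by rewrite Rminus_diag Rabs_R0 Rmult_0_r; apply: Rle_refl.
Qed.

Lemma cesaro_cv_density_zero (p : pred nat) x c B :
  density_zero p -> (forall k, ~~ p k -> x k = c) -> (forall k, Rabs (x k - c) <= B) ->
  Un_cv (fun n => sum_f_R0 x n / INR n.+1) c.
Proof.
move=> p0 x_off x_le.
have mean_c0 : Un_cv (fun n => sum_f_R0 x n / INR n.+1 - c) 0.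
  apply: (Un_cv0_le (C := B)) p0 => n.
  have n_gt0 : 0 < INR n.+1 by apply: lt_0_INR; lia.
  have -> : sum_f_R0 x n / INR n.+1 - c = (sum_f_R0 x n - INR n.+1 * c) / INR n.+1
    by field; lra.
  rewrite /Rdiv !Rabs_mult !Rabs_inv (Rabs_right (INR n.+1)) ?(Rabs_right (INR _));
    try exact/Rle_ge/pos_INR.
  rewrite -Rmult_assoc; apply: Rmult_le_compat_r; first by left; apply: Rinv_0_lt_compat.
  exact: sum_le_count.
move=> eps /mean_c0 [N HN]; exists N => n /HN.
by rewrite /R_dist Rminus_0_r.
Qed.

(* The block [Q^2, (Q+1)^2) begins with floor(sqrt Q) elements of the sparse
   set, tagged with Q - floor(sqrt Q)^2; the rest of the block is a gap.  Every
   tag recurs in infinitely many blocks, so each tag and the complement both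
   contain windows of unbounded length, yet the set has density zero. *)
Definition sparse (k : nat) : bool :=
  let Q := Nat.sqrt k in (k - Q * Q < Nat.sqrt Q)%N.

Definition sparse_tag (k : nat) : nat :=
  let Q := Nat.sqrt k in (Q - Nat.sqrt Q * Nat.sqrt Q)%N.

Lemma sqrt_bounds a : (Nat.sqrt a * Nat.sqrt a <= a < (Nat.sqrt a).+1 * (Nat.sqrt a).+1)%N.
Proof. by have := Nat.sqrt_spec a; lia. Qed.

Lemma leq_sqrt b a : (b * b <= a)%N -> (b <= Nat.sqrt a)%N.
Proof. by move/leP/Nat.sqrt_le_square/leP. Qed.

Lemma count_sparse_le n :
  (count sparse (iota 0 n.+1) <= Nat.sqrt n * Nat.sqrt (Nat.sqrt n)
     + minn (n - Nat.sqrt n * Nat.sqrt n).+1 (Nat.sqrt (Nat.sqrt n)))%N.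
Proof.
elim: n => [|n IH]; first by [].
rewrite count_iotaS [sparse n.+1]/sparse.
move: IH; set Q := Nat.sqrt n; set Q' := Nat.sqrt n.+1 => IH.
have := sqrt_bounds n; have := sqrt_bounds n.+1; rewrite -/Q -/Q' => HQ' HQ.
have Q_le : (Q <= Q')%N by apply/leP/Nat.sqrt_le_mono; lia.
have Q'_le : (Q' <= Q.+1)%N by apply: contraLR HQ' => /negP; nia.
case: (eqVneq Q' Q) => [-> | Q'_neq].
  by case: (ltnP (n.+1 - Q * Q) (Nat.sqrt Q)) => lt_s; rewrite ?addn1 ?addn0; lia.
have Q'_eq : Q' = Q.+1 by lia.
rewrite Q'_eq in HQ' *.
have s_le : (Nat.sqrt Q <= Nat.sqrt Q.+1)%N by apply/leP/Nat.sqrt_le_mono; lia.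
have s_ge1 : (1 <= Nat.sqrt Q.+1)%N by apply: leq_sqrt.
by case: (ltnP (n.+1 - Q.+1 * Q.+1) (Nat.sqrt Q.+1)) => lt_s; rewrite ?addn1 ?addn0; nia.
Qed.

Lemma density_zero_sparse : density_zero sparse.
Proof.
move=> eps eps_gt0.
have [K [K_small K_gt0]] := archimed_cor1 (eps / 2) ltac:(lra).
exists (K * K * (K * K))%N => n /leP n_ge.
have K_le : (K <= Nat.sqrt (Nat.sqrt n))%N by apply/leq_sqrt/leq_sqrt.
have count_K : (count sparse (iota 0 n.+1) * K <= 2 * n.+1)%N.
  have := count_sparse_le n; have := sqrt_bounds n; have := sqrt_bounds (Nat.sqrt n).
  move: K_le; set Q := Nat.sqrt n; set s := Nat.sqrt Q => K_le HQ Hn Hcount.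
  have : (count sparse (iota 0 n.+1) * K <= (Q + 1) * s * s)%N by nia.
  nia.
have n_gt0 : 0 < INR n.+1 by apply: lt_0_INR; lia.
have K_pos : 0 < INR K by apply: lt_0_INR; lia.
move/leP/le_INR: count_K; rewrite !mult_INR [INR 2]/= => count_K.
rewrite /R_dist Rminus_0_r Rabs_right; last first.
  by apply/Rle_ge/Rmult_le_pos; [apply: pos_INR | left; apply: Rinv_0_lt_compat].
suff : INR (count sparse (iota 0 n.+1)) / INR n.+1 <= 2 * / INR K by lra.
apply: (Rmult_le_reg_r (INR n.+1 * INR K)); first exact: Rmult_lt_0_compat.
have -> : 2 * / INR K * (INR n.+1 * INR K) = 2 * INR n.+1 by field; lra.
by have -> : INR (count sparse (iota 0 n.+1)) / INR n.+1 * (INR n.+1 * INR K)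
             = INR (count sparse (iota 0 n.+1)) * INR K by field; lra.
Qed.

Definition tag_window (j i : nat) : nat := let q := ((j + i).+1 ^ 2 + j)%N in (q * q)%N.

Definition gap_window (i : nat) : nat := let q := (i.+1 ^ 2)%N in (q * q + i.+1)%N.

Lemma sparse_tag_window j i k : (k < (j + i).+1)%N ->
  sparse (tag_window j i + k) /\ sparse_tag (tag_window j i + k) = j.
Proof.
rewrite /tag_window /sparse /sparse_tag; set s := (j + i).+1; set q := (s ^ 2 + j)%N => lt_k.
have -> : Nat.sqrt (q * q + k) = q by apply: Nat.sqrt_unique; rewrite /q; nia.
have -> : Nat.sqrt q = s by apply: Nat.sqrt_unique; rewrite /q; nia.
by split; [apply/ltP; lia | rewrite /q; lia].
Qed.

Lemma gap_window_not_sparse i k : (k < i.+1)%N -> ~~ sparse (gap_window i + k).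
Proof.
rewrite /gap_window /sparse; set q := (i.+1 ^ 2)%N => lt_k.
have -> : Nat.sqrt (q * q + i.+1 + k) = q by apply: Nat.sqrt_unique; rewrite /q; nia.
have -> : Nat.sqrt q = i.+1 by apply: Nat.sqrt_unique; rewrite /q; nia.
by rewrite -leqNgt; lia.
Qed.

Definition grid_pt (k : nat) : R := / INR k.+2.

Lemma grid_pt_range k : 0 <= grid_pt k <= 1.
Proof.
have k_ge1 : 1 <= INR k.+2 by apply: (le_INR 1); lia.
split; first by left; apply: Rinv_0_lt_compat; lra.
by rewrite -Rinv_1; apply: Rinv_le_contravar; lra.
Qed.

Lemma grid_pt_inj : injective grid_pt.
Proof. by move=> a b /Rinv_eq_reg/INR_eq; case. Qed.

Definition dyadic_cell (m : nat) (t : R) : Z := up (t * 2 ^ m).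

Lemma dyadic_cell_separates s t : s <> t ->
  exists m, forall m', (m <= m')%N -> dyadic_cell m' s <> dyadic_cell m' t.
Proof.
move=> st; have st_gt0 : 0 < Rabs (s - t) by apply: Rabs_pos_lt; lra.
have [m [m_small m_gt0]] := archimed_cor1 _ st_gt0.
exists m => m' /leP m_le same.
have m_pos : 0 < INR m by apply: lt_0_INR.
have m_le_pow : INR m <= 2 ^ m'.
  apply: Rle_trans (le_INR _ _ m_le) _; elim: m' {m_le same} => [|n IH]; first by simpl; lra.
  by rewrite S_INR /=; have := pow_R1_Rle 2 n ltac:(lra); lra.
have close : Rabs ((s - t) * 2 ^ m') < 1.
  have := archimed (s * 2 ^ m'); have := archimed (t * 2 ^ m').
  rewrite /dyadic_cell in same; rewrite same => ? ?.
  by apply: Rabs_def1; lra.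
move: close; rewrite Rabs_mult (Rabs_right (2 ^ m')); last by left; apply: pow_lt; lra.
have := Rmult_lt_compat_r _ _ _ m_pos m_small; rewrite Rinv_l; last by lra.
by nra.
Qed.

Lemma dyadic_cell_separates_seq (ss : seq R) t : exists m,
  forall s, s \in ss -> s <> t -> dyadic_cell m s <> dyadic_cell m t.
Proof.
suff [m Hm] : exists m, forall m', (m <= m')%N ->
    forall s, s \in ss -> s <> t -> dyadic_cell m' s <> dyadic_cell m' t.
  by exists m; apply: Hm.
elim: ss => [|s ss [m IH]]; first by exists 0%N.
case: (Req_dec s t) => [-> | st].
  exists m => m' m_le s'; rewrite inE => /orP[/eqP -> //|]; exact: IH.
have [m0 Hm0] := dyadic_cell_separates st.
exists (maxn m m0) => m' m_le s'; rewrite inE => /orP[/eqP ->|s'_in] s't.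
  by apply: Hm0; lia.
by apply: IH s'_in s't; lia.
Qed.

(* A code is a list of entries (m, z, k); the coded function takes the value
   [grid_pt k] on the dyadic cell z of level m, for the first entry whose cell
   contains its argument, and 0 outside all listed cells. *)
Fixpoint code_eval (code : seq (nat * Z * nat)) (t : R) : R :=
  if code is (m, z, k) :: code' then
    if dyadic_cell m t == z then grid_pt k else code_eval code' t
  else 0.

Lemma code_eval_range code t : 0 <= code_eval code t <= 1.
Proof.
elim: code => [|[[m z] k] code IH] /=; first lra.
by case: ifP => _; [apply: grid_pt_range | apply: IH].
Qed.

Lemma code_interpolates (l : seq (R * nat)) :
  {in l &, forall p q, p.1 = q.1 -> p.2 = q.2} ->
  exists code, forall p, p \in l -> code_eval code p.1 = grid_pt p.2.
Proof.
elim: l => [|[t k] l IH] l_fun; first by exists [::].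
have [code Hcode] : exists code, forall p, p \in l -> code_eval code p.1 = grid_pt p.2.
  by apply: IH => p q p_in q_in; apply: l_fun; rewrite inE ?p_in ?q_in orbT.
have [m Hm] := dyadic_cell_separates_seq (map fst l) t.
exists ((m, dyadic_cell m t, k) :: code) => -[s k'] /=; rewrite inE => /orP[/eqP [-> ->]|sk_in].
  by rewrite eqxx.
move: sk_in; case: (Req_dec s t) => [-> | st] sk_in; rewrite ?eqxx.
  by congr grid_pt; apply: (l_fun (t, k) (t, k')); rewrite ?inE ?eqxx ?sk_in ?orbT.
case: ifP => [/eqP same | _]; last exact: (Hcode (s, k')).
by case: (Hm s) => //; apply/mapP; exists (s, k').
Qed.

Definition coded_fun (j : nat) (t : R) : R :=
  if unpickle j is Some code then code_eval code t else 0.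

Lemma coded_fun_range j t : 0 <= coded_fun j t <= 1.
Proof. by rewrite /coded_fun; case: unpickle => [code|]; [apply: code_eval_range | lra]. Qed.

Lemma coded_fun_interpolates (l : seq (R * nat)) :
  {in l &, forall p q, p.1 = q.1 -> p.2 = q.2} ->
  exists j, forall p, p \in l -> coded_fun j p.1 = grid_pt p.2.
Proof.
case/code_interpolates => code Hcode.
by exists (pickle code) => p p_in; rewrite /coded_fun pickleK; apply: Hcode.
Qed.

Lemma coded_fun_interpolates_inj n (t : 'I_n -> R) (g : 'I_n -> nat) :
  injective t -> exists j, forall i, coded_fun j (t i) = grid_pt (g i).
Proof.
move=> t_inj; have [|j Hj] := @coded_fun_interpolates [seq (t i, g i) | i <- enum 'I_n].
  by move=> _ _ /mapP [i _ ->] /mapP [i' _ ->] /= /t_inj ->.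
by exists j => i; apply: (Hj (t i, g i)); apply: map_f; rewrite mem_enum.
Qed.

Import Order.TTheory GRing.Theory Num.Theory.
Local Open Scope ring_scope.
Local Notation widen := (widen_ord (leqnSn _)).

Lemma lift_max_widen n (j : 'I_n) : lift ord_max j = widen j.
Proof. by apply: val_inj; rewrite /= /bump leqNgt ltn_ord. Qed.

Section MultivariateToUnivariate.

Variables (n : nat) (R : comNzRingType).

Lemma muniX (m : 'X_{1..n.+1}) :
  muni ('X_[m] : {mpoly R[n.+1]}) = 'X_[[multinom m (widen i) | i < n]] *: 'X^(m ord_max).
Proof. by rewrite muniE msuppX big_seq1 mcoeffX eqxx scale1r. Qed.

Lemma meval_muni (P : {mpoly R[n.+1]}) (v : 'I_n.+1 -> R) :
  P.@[v] = (map_poly (meval (fun i => v (widen i))) (muni P)).[v ord_max].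
Proof.
elim/mpolyind: P => [|c m p _ _ IH]; first by rewrite meval0 muni0 map_poly0 horner0.
rewrite mevalD mevalZ mevalX muniD muniZ muniX !raddfD /= hornerD -IH; congr (_ + _).
rewrite !map_polyZ /= mevalC map_polyXn hornerZ hornerZ hornerXn mevalX.
rewrite big_ord_recr /=; congr (_ * (_ * _)).
by apply: eq_bigr => i _; rewrite mnmE.
Qed.

Lemma mcoeff_muni (P : {mpoly R[n.+1]}) (m : 'X_{1..n.+1}) :
  P@_m = ((muni P)`_(m ord_max))@_[multinom m (widen i) | i < n].
Proof.
elim/mpolyind: P => [|c m0 p _ _ IH]; first by rewrite muni0 coef0 !mcoeff0.
rewrite mcoeffD IH muniD coefD mcoeffD; congr (_ + _).
rewrite muniZ muniX coefZ coefZ coefXn mcoeffZ mcoeffX mcoeffCM mulr_natr mcoeffMn mcoeffX.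
congr (_ * _).
have -> : (m0 == m) = ([multinom m0 (widen i) | i < n] == [multinom m (widen i) | i < n])
                      && (m ord_max == m0 ord_max).
  apply/eqP/andP => [-> | [/eqP E1 /eqP E2]]; first by split.
  apply/mnmP => i; case: (unliftP ord_max i) => [j -> | ->] //.
  by have := congr1 (fun mm : 'X_{1..n} => mm j) E1; rewrite !mnmE lift_max_widen.
by case: eqP; case: eqP; rewrite /= ?mulr1 ?mulr0 ?mul1r ?mul0r.
Qed.

End MultivariateToUnivariate.

Section NonrootAlongInjection.

Variables (F : idomainType) (f : nat -> F).
Hypothesis f_inj : injective f.

Lemma poly_nonroot_inj (r : {poly F}) : r != 0 -> exists y, r.[f y] != 0.
Proof.
move=> r_neq0; apply: NNPP => all_roots.
have roots : all (root r) (map f (iota 0 (size r))).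
  apply/allP => _ /mapP [y _ ->]; apply/negPn/negP => ry.
  by apply: all_roots; exists y.
have := max_poly_roots r_neq0 roots.
by rewrite map_inj_uniq ?iota_uniq // size_map size_iota ltnn => /(_ isT).
Qed.

Lemma mpoly_nonroot_inj n (P : {mpoly F[n]}) :
  P != 0 -> exists g : 'I_n -> nat, P.@[fun i => f (g i)] != 0.
Proof.
elim: n P => [|n IH] P P_neq0.
  exists (fun _ => 0%N).
  have P_const : P = (P@_0%MM)%:MP.
    apply/mpolyP => m; rewrite mcoeffC.
    have -> : m = 0%MM by apply/mnmP => -[].
    by rewrite eqxx mulr1.
  by move: P_neq0; rewrite P_const mpolyC_eq0 mevalC.
have [m Pm_neq0] : exists m, P@_m != 0.
  apply: NNPP => all0; move/eqP: P_neq0; apply; apply/mpolyP => m.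
  by rewrite mcoeff0; apply/eqP/negPn/negP => Pm; apply: all0; exists m.
have [g' Hg'] : exists g' : 'I_n -> nat, ((muni P)`_(m ord_max)).@[fun i => f (g' i)] != 0.
  by apply: IH; apply: contraNneq Pm_neq0 => E; rewrite mcoeff_muni E mcoeff0.
set r := map_poly (meval (fun i => f (g' i))) (muni P).
have [y Hy] : exists y, r.[f y] != 0.
  by apply: poly_nonroot_inj; apply: contraNneq Hg' => E; rewrite -coef_map -/r E coef0.
exists (fun i => if unlift ord_max i is Some j then g' j else y).
rewrite meval_muni /= unlift_none.
have -> : (fun i : 'I_n => f (if unlift ord_max (widen i) is Some j then g' j else y))
          = (fun i => f (g' i)).
  by apply: functional_extensionality => i; rewrite -lift_max_widen liftK.
exact: Hy.
Qed.

End NonrootAlongInjection.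

Lemma mpoly_bounded_unit_cube n (P : {mpoly R[n]}) :
  exists B : R, forall v : 'I_n -> R, (forall i, 0 <= v i <= 1) -> `|P.@[v]| <= B.
Proof.
elim/mpolyind: P => [|c m p _ _ [B HB]]; first by exists 0 => v _; rewrite meval0 normr0.
exists (`|c| + B) => v v01.
rewrite mevalD mevalZ mevalX; apply: le_trans (ler_normD _ _) (lerD _ (HB v v01)).
rewrite normrM; apply: ler_piMr => //.
have mon_ge0 : 0 <= \prod_(i < n) v i ^+ m i.
  by apply: prodr_ge0 => i _; rewrite exprn_ge0 //; case/andP: (v01 i).
rewrite ger0_norm //; apply: prodr_ile1 => i _; case/andP: (v01 i) => v_ge0 v_le1.
by rewrite exprn_ge0 //= exprn_ile1.
Qed.

Lemma meval_at0 n (R : comNzRingType) (P : {mpoly R[n]}) :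
  P.@[fun _ => 0] = P@_0%MM.
Proof.
elim/mpolyind: P => [|c m p _ _ IH]; first by rewrite meval0 mcoeff0.
rewrite mevalD mevalZ mevalX mcoeffD mcoeffZ mcoeffX IH; congr (_ * _ + _).
case: (eqVneq m 0%MM) => [-> | m_neq0].
  by apply: big1 => i _; rewrite mnm0E expr0.
have [i mi_neq0] : exists i, m i != 0%N.
  apply: NNPP => all0; move/eqP: m_neq0; apply; apply/mnmP => i; rewrite mnm0E.
  by apply/eqP/negPn/negP => mi; apply: all0; exists i.
by rewrite (bigD1 i) //= expr0n (negbTE mi_neq0) mul0r.
Qed.

Local Open Scope R_scope.

Definition generator (t : R) (k : nat) : R :=
  if sparse k then coded_fun (sparse_tag k) t else 0.

Lemma generator_range t k : 0 <= generator t k <= 1.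
Proof. by rewrite /generator; case: sparse; [apply: coded_fun_range | lra]. Qed.

Lemma generator_bounded t : bounded (generator t).
Proof. by exists 1 => k; have [? ?] := generator_range t k; rewrite Rabs_right; lra. Qed.

Lemma generator_off_sparse t k : ~~ sparse k -> generator t k = 0.
Proof. by rewrite /generator => /negbTE ->. Qed.

Lemma generator_tag_window t j i k :
  (k < (j + i).+1)%N -> generator t (tag_window j i + k) = coded_fun j t.
Proof. by case/sparse_tag_window => sp tag; rewrite /generator sp tag. Qed.

Lemma generator_inj : injective generator.
Proof.
move=> s t st; apply: NNPP => s_neq_t.
have [|j Hj] := @coded_fun_interpolates [:: (s, 0%N); (t, 1%N)].
  move=> p q; rewrite !inE => /orP[]/eqP-> /orP[]/eqP-> //=.
  by move=> ts; case: s_neq_t; rewrite ts.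
have := congr1 (fun f => f (tag_window j 0 + 0)%N) st.
rewrite !generator_tag_window // (Hj (s, 0%N)) ?(Hj (t, 1%N)) ?inE ?eqxx ?orbT //.
by move/grid_pt_inj.
Qed.

Section AlgebraElement.

Variables (n : nat) (P : {mpoly R[n]}) (t : 'I_n -> R).

Let x := peval_seq P (fun i => generator (t i)).

Lemma peval_generator_bounded : bounded x.
Proof.
have [B HB] := mpoly_bounded_unit_cube P.
exists B => k; apply/RleP/HB => i; have [? ?] := generator_range (t i) k.
by apply/andP; split; apply/RleP.
Qed.

Lemma peval_generator_off_sparse : (P@_0%MM = 0)%R -> forall k, ~~ sparse k -> x k = 0.
Proof.
move=> P0 k k_off; rewrite /x /peval_seq.
rewrite (@meval_eq _ _ _ (fun _ => 0%R)) ?meval_at0 ?P0 // => i.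
by rewrite generator_off_sparse.
Qed.

Lemma peval_generator_tag_window : injective t -> P != 0%R ->
  exists v j, v <> 0 /\ forall i k, (k < (j + i).+1)%N -> x (tag_window j i + k)%N = v.
Proof.
move=> t_inj P_neq0.
have [g Pg] := mpoly_nonroot_inj grid_pt_inj P_neq0.
have [j Hj] := coded_fun_interpolates_inj g t_inj.
exists (P.@[fun i => grid_pt (g i)]), j; split; first by apply/eqP.
move=> i k lt_k; rewrite /x /peval_seq; apply: meval_eq => l.
by rewrite generator_tag_window.
Qed.

End AlgebraElement.

Theorem theorem3p4 :
  strongly_algebrable R (fun x => cesaro_S x /\ ~ c_hat x).
Proof.
exists generator; split; first exact: generator_inj.
split; first exact: generator_bounded.
move=> n P t t_inj P_neq0 P0.
have x_bounded := peval_generator_bounded P t.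
have x_off := peval_generator_off_sparse t P0.
have [v [j [v_neq0 x_tag]]] := peval_generator_tag_window t_inj P_neq0.
split; [split; first split|].
- exact: x_bounded.
- case: x_bounded => B x_le; exists 0; apply: cesaro_cv_density_zero density_zero_sparse x_off _.
  by move=> k; rewrite Rminus_0_r; apply: x_le.
- apply: (not_c_hat_of_windows (a1 := tag_window j) (a2 := gap_window)
           (len1 := fun i => (j + i).+1) (len2 := S)) x_tag _ v_neq0 => //.
  + by move=> i; lia.
  + by move=> i k /gap_window_not_sparse; apply: x_off.
- by move/(congr1 (fun y => y (tag_window j 0 + 0)%N)); rewrite x_tag.
Qed.
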